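(* Let $\sigma^2>0$, $\theta\in\mathbb R^d\setminus\{0\}$, $\gamma>0$ and $\mathcal X\subseteq\mathbb R^d$. For $x\in\mathcal X$ and $y\in\mathbb R$ define the $\gamma$-score of the normal linear regression model $$S_\gamma(x,y,\theta)=(2\pi\sigma^2)^{-\frac{\gamma}{2(\gamma+1)}}\exp\Big\{-\frac{\gamma}{2}\frac{(y-\theta^\top x)^2}{\sigma^2}\Big\}\frac{y-\theta^\top x}{\sigma}\,x,$$ and let $H_\theta=\{v\in\mathbb R^d:\theta^\top v=0\}$, with $d(v,H_\theta)$ the Euclidean distance from $v$ to $H_\theta$. Then for every fixed $y\in\mathbb R$, $\sup_{x\in\mathcal X}d(S_\gamma(x,y,\theta),H_\theta)<\infty$.
   Context: The model is the normal linear regression model $p(y|x,\theta,\sigma^2)=(2\pi\sigma^2)^{-1/2}\exp\{-(y-\theta^\top x)^2/(2\sigma^2)\}$ with known $\sigma^2$; $S_\gamma$ is the score of the minimum $\gamma$-divergence estimator. *)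

From HB Require Import structures.
From mathcomp Require Import all_boot all_order all_algebra.
From mathcomp Require Import all_classical all_reals all_analysis.
Set Implicit Arguments. Unset Strict Implicit. Unset Printing Implicit Defensive.
Import Order.TTheory GRing.Theory Num.Theory.
Local Open Scope classical_set_scope.
Local Open Scope ring_scope.

Definition dotp (R : realType) (d : nat) (u v : 'rV[R]_d) : R :=
  \sum_(i < d) u 0 i * v 0 i.

Definition enorm (R : realType) (d : nat) (v : 'rV[R]_d) : R :=
  Num.sqrt (dotp v v).

Definition hyperplane (R : realType) (d : nat) (theta : 'rV[R]_d) : set 'rV[R]_d :=
  [set v | dotp theta v = 0].

Definition edist_set (R : realType) (d : nat) (v : 'rV[R]_d) (A : set 'rV[R]_d) : R :=
  inf [set enorm (v - w) | w in A].

Definition Sgamma (R : realType) (d : nat) (sigma gamma : R)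
  (x : 'rV[R]_d) (y : R) (theta : 'rV[R]_d) : 'rV[R]_d :=
  ((2 * pi * sigma ^+ 2) `^ (- (gamma / (2 * (gamma + 1))))
   * expR (- (gamma / 2) * ((y - dotp theta x) ^+ 2 / sigma ^+ 2))
   * ((y - dotp theta x) / sigma)) *: x.

(** The hyperplane [H_theta] has normal [theta], so the distance from [v] to it
    is at most [|theta^T v| / |theta|] (attained at the orthogonal projection).
    For the score [S = c(u) x] with [u = (y - theta^T x)/sigma] one has
    [theta^T x = y - sigma u], hence [theta^T S] is a constant times
    [e^{-gamma u^2/2} u (y - sigma u)]; the Gaussian factor beats the polynomial
    one, since [v e^{-v} <= 1], so this is bounded uniformly in [u], i.e. in [x]. *)
From HB Require Import structures.
From mathcomp Require Import all_boot all_order all_algebra.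
From mathcomp Require Import all_classical all_reals all_analysis.
From mathcomp Require Import ring lra.
Import Order.TTheory GRing.Theory Num.Theory.
Local Open Scope classical_set_scope.
Local Open Scope ring_scope.

Section GaussianTails.
Context {R : realType}.

Lemma mulr_expRN_le1 (v : R) : v * expR (- v) <= 1.
Proof.
rewrite expRN ler_pdivrMr ?expR_gt0 // mul1r.
by have := expR_ge1Dx v; lra.
Qed.

Lemma sqr_mul_expR_le (a u : R) : 0 < a ->
  u ^+ 2 * expR (- (a * u ^+ 2)) <= a^-1.
Proof.
move=> a_gt0.
have -> : u ^+ 2 * expR (- (a * u ^+ 2)) =
          a^-1 * (a * u ^+ 2 * expR (- (a * u ^+ 2))).
  by field; rewrite gt_eqF.
by rewrite -[leRHS]mulr1 ler_wpM2l ?mulr_expRN_le1 // invr_ge0 ltW.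
Qed.

Lemma norm_mul_expR_le (a u : R) : 0 < a ->
  `|u| * expR (- (a * u ^+ 2)) <= 1 + a^-1.
Proof.
move=> a_gt0.
have u_le : `|u| <= 1 + u ^+ 2.
  by case: (lerP 0 u) => u0; [rewrite ger0_norm | rewrite ltr0_norm]; nra.
have E1 : expR (- (a * u ^+ 2)) <= 1.
  by rewrite -expR0 ler_expR oppr_le0 mulr_ge0 ?sqr_ge0 ?ltW.
have := sqr_mul_expR_le a u a_gt0.
have := expR_gt0 (- (a * u ^+ 2)).
nra.
Qed.

Lemma gauss_weight_bound (a s y u : R) : 0 < a -> 0 < s ->
  `|expR (- (a * u ^+ 2)) * u * (y - s * u)| <= (1 + a^-1) * `|y| + s * a^-1.
Proof.
move=> a_gt0 s_gt0.
set E := expR _.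
have -> : E * u * (y - s * u) = E * u * y - s * (u ^+ 2 * E) by ring.
apply: (le_trans (ler_normB _ _)); apply: lerD.
  rewrite !normrM ger0_norm ?expR_ge0 // [E * _]mulrC.
  by rewrite ler_wpM2r ?norm_mul_expR_le.
rewrite normrM (gtr0_norm s_gt0) (ger0_norm (mulr_ge0 (sqr_ge0 u) (expR_ge0 _))).
by rewrite ler_wpM2l ?sqr_mul_expR_le // ltW.
Qed.

End GaussianTails.

Section Hyperplane.
Context {R : realType} {d : nat}.
Implicit Types (u v w theta : 'rV[R]_d) (c : R).

Lemma dotpC u v : dotp u v = dotp v u.
Proof. by apply: eq_bigr => i _; rewrite mulrC. Qed.

Lemma dotpZr u v c : dotp u (c *: v) = c * dotp u v.
Proof. by rewrite /dotp mulr_sumr; apply: eq_bigr => i _; rewrite !mxE mulrCA. Qed.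

Lemma dotpZl u v c : dotp (c *: u) v = c * dotp u v.
Proof. by rewrite dotpC dotpZr dotpC. Qed.

Lemma dotpBr u v w : dotp u (v - w) = dotp u v - dotp u w.
Proof. by rewrite /dotp -sumrB; apply: eq_bigr => i _; rewrite !mxE mulrBr. Qed.

Lemma dotpvv_ge0 v : 0 <= dotp v v.
Proof. by apply: sumr_ge0 => i _; rewrite -expr2 sqr_ge0. Qed.

Lemma dotpvv_gt0 [v] : v != 0 -> 0 < dotp v v.
Proof.
move=> v_neq0; rewrite lt_def dotpvv_ge0 andbT; apply: contra v_neq0 => /eqP vv0.
apply/eqP/matrixP => i j; rewrite mxE ord1.
have /eqP := psumr_eq0P (fun k _ => sqr_ge0 (v 0 k)) vv0 (i := j) isT.
by rewrite mulf_eq0 orbb => /eqP.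
Qed.

Lemma enormZ v c : enorm (c *: v) = `|c| * enorm v.
Proof. by rewrite /enorm dotpZl dotpZr mulrA -expr2 sqrtrM ?sqr_ge0 // sqrtr_sqr. Qed.

Lemma enorm_gt0 [v] : v != 0 -> 0 < enorm v.
Proof. by move=> v_neq0; rewrite sqrtr_gt0 dotpvv_gt0. Qed.

Lemma edist_hyperplane_le v [theta] : theta != 0 ->
  edist_set v (hyperplane theta) <= `|dotp theta v| / enorm theta.
Proof.
move=> theta_neq0.
have tt_gt0 := dotpvv_gt0 theta_neq0.
set c := dotp theta v / dotp theta theta.
have proj_in : hyperplane theta (v - c *: theta).
  by rewrite /hyperplane /= dotpBr dotpZr divfK ?subrr ?gt_eqF.
have dist_proj : enorm (v - (v - c *: theta)) = `|dotp theta v| / enorm theta.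
  rewrite opprB addrC subrK enormZ normrM normfV (gtr0_norm tt_gt0).
  rewrite -[in dotp theta theta](sqr_sqrtr (ltW tt_gt0)) -/(enorm theta).
  by field; rewrite gt_eqF ?enorm_gt0.
rewrite -dist_proj; apply: ge_inf; last by exists (v - c *: theta).
by exists 0 => _ [w _ <-]; apply: sqrtr_ge0.
Qed.

End Hyperplane.

Definition Sgamma_dotp_bound {R : realType} (sigma gamma y : R) : R :=
  (2 * pi * sigma ^+ 2) `^ (- (gamma / (2 * (gamma + 1))))
  * ((1 + (gamma / 2)^-1) * `|y| + sigma * (gamma / 2)^-1).

Lemma norm_dotp_Sgamma_le (R : realType) (d : nat) (sigma gamma y : R)
    (theta x : 'rV[R]_d) : 0 < sigma -> 0 < gamma ->
  `|dotp theta (Sgamma sigma gamma x y theta)| <= Sgamma_dotp_bound sigma gamma y.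
Proof.
move=> sigma_gt0 gamma_gt0.
rewrite /Sgamma /Sgamma_dotp_bound dotpZr.
set K := _ `^ _; set t := dotp theta x; set u := (y - t) / sigma.
have -> : (y - t) ^+ 2 / sigma ^+ 2 = u ^+ 2 by rewrite expr_div_n.
have -> : t = y - sigma * u by rewrite mulrC divfK ?gt_eqF //; ring.
rewrite -[K * _ * _ * _]mulrA -[K * _ * _]mulrA normrM ger0_norm ?powR_ge0 //.
by rewrite ler_wpM2l ?powR_ge0 // mulrA mulNr gauss_weight_bound ?divr_gt0.
Qed.

Theorem mainTheorem6 (R : realType) (d : nat) (sigma gamma : R)
  (theta : 'rV[R]_d) (X : set 'rV[R]_d) (y : R) :
  0 < sigma -> theta != 0 -> 0 < gamma ->
  exists M : R, forall x, X x ->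
    edist_set (Sgamma sigma gamma x y theta) (hyperplane theta) <= M.
Proof.
move=> sigma_gt0 theta_neq0 gamma_gt0.
exists (Sgamma_dotp_bound sigma gamma y / enorm theta) => x _.
apply: le_trans (edist_hyperplane_le _ theta_neq0) _.
by rewrite ler_wpM2r ?invr_ge0 ?norm_dotp_Sgamma_le // ltW ?enorm_gt0.
Qed.
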